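(* Let $R=\mathbb C[x,y,z,w]$ and $I=\langle x,z,w\rangle\cap\langle x,y\rangle$. There is no collection $\Lambda=(\ell_1,\ldots,\ell_n)$ of linear forms in $R$ together with an integer $a\in\{1,\ldots,n\}$ satisfying $n-a+1=3$ and $\sqrt{I_a(\Lambda)}=I$.
   Context: For a collection $\Lambda=(\ell_1,\ldots,\ell_n)$ of linear forms (possibly some proportional) and $1\le a\le n$, $I_a(\Lambda)$ is the ideal generated by all products $\ell_{i_1}\cdots\ell_{i_a}$ with $1\le i_1<\cdots<i_a\le n$. *)

(* R = F[x,y,z,w] realised as iterated univariate polynomials
   {poly {poly {poly {poly F}}}}, variables x (innermost), y, z, w (outermost). *)
From HB Require Import structures.
From mathcomp Require Import all_boot all_order all_algebra.
Set Implicit Arguments. Unset Strict Implicit. Unset Printing Implicit Defensive.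
Import Order.TTheory GRing.Theory Num.Theory.
Local Open Scope ring_scope.

Definition P4 (F : numClosedFieldType) := {poly {poly {poly {poly F}}}}.

Definition cst (F : numClosedFieldType) (c : F) : P4 F := c%:P%:P%:P%:P.
Definition varx (F : numClosedFieldType) : P4 F := ('X : {poly F})%:P%:P%:P.
Definition vary (F : numClosedFieldType) : P4 F := ('X : {poly {poly F}})%:P%:P.
Definition varz (F : numClosedFieldType) : P4 F := ('X : {poly {poly {poly F}}})%:P.
Definition varw (F : numClosedFieldType) : P4 F := 'X.

Definition in_ideal (F : numClosedFieldType) (G : seq (P4 F)) (f : P4 F) : Prop :=
  exists c : seq (P4 F), size c = size G /\
    f = \sum_(i < size G) c`_i * G`_i.

Definition in_radical (F : numClosedFieldType) (G : seq (P4 F)) (f : P4 F) : Prop :=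
  exists k : nat, in_ideal G (f ^+ k).

Definition is_linform (F : numClosedFieldType) (l : P4 F) : Prop :=
  exists c1 c2 c3 c4 : F,
    l = cst c1 * varx F + cst c2 * vary F + cst c3 * varz F + cst c4 * varw F.

Definition Ia_gens (F : numClosedFieldType) (n : nat) (lam : 'I_n -> P4 F) (a : nat)
  : seq (P4 F) :=
  [seq (\prod_(i in A) lam i) | A : {set 'I_n} <- enum [set B : {set 'I_n} | #|B| == a]].

From HB Require Import structures.
From mathcomp Require Import all_boot all_order all_algebra.
From mathcomp Require Import zify ring.
Import Order.TTheory GRing.Theory Num.Theory.
Set Implicit Arguments.
Unset Strict Implicit.
Unset Printing Implicit Defensive.
Local Open Scope ring_scope.

(* If n - a + 1 = 3, every generator of I_a(Λ) vanishes at a point p exactly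
   when at least three of the forms vanish at p.  Evaluating at points,
   sqrt(I_a(Λ)) = I therefore says: at least three forms vanish at p iff p lies
   on V(I) = {x = y = 0} ∪ {x = z = w = 0}.
   The points (0,0,1,t) force three forms in x, y alone, and (0,1,1,0) forces
   one of them, u, to involve y; the point (0,1,0,0) forces three forms
   t1, t2, t3 in x, z, w.  Two of the t_i with independent (z, w)-parts would
   vanish together with u at a point with x = 1, so these parts are pairwise
   proportional; evaluating at (0, 1, -D, C), for (C, D) the (z, w)-part of
   one t_i, shows that they all vanish.  Then t1, t2, t3 vanish at (0,1,0,1),
   which is not on V(I). *)

Section Evaluation.
Variable F : numClosedFieldType.
Implicit Types (f g : P4 F).

Definition eval_at (p1 p2 p3 p4 : F) f : F := f.[p4%:P%:P%:P].[p3%:P%:P].[p2%:P].[p1].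

Lemma eval_atD p1 p2 p3 p4 f g :
  eval_at p1 p2 p3 p4 (f + g) = eval_at p1 p2 p3 p4 f + eval_at p1 p2 p3 p4 g.
Proof. by rewrite /eval_at !hornerD. Qed.

Lemma eval_atM p1 p2 p3 p4 f g :
  eval_at p1 p2 p3 p4 (f * g) = eval_at p1 p2 p3 p4 f * eval_at p1 p2 p3 p4 g.
Proof. by rewrite /eval_at !hornerM. Qed.

Lemma eval_atX p1 p2 p3 p4 f k :
  eval_at p1 p2 p3 p4 (f ^+ k) = eval_at p1 p2 p3 p4 f ^+ k.
Proof. by rewrite /eval_at !horner_exp. Qed.

Lemma eval_at_sum p1 p2 p3 p4 m (G : 'I_m -> P4 F) :
  eval_at p1 p2 p3 p4 (\sum_(i < m) G i) = \sum_(i < m) eval_at p1 p2 p3 p4 (G i).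
Proof. by apply: (big_morph _ (eval_atD p1 p2 p3 p4)); rewrite /eval_at !horner0. Qed.

Lemma eval_at_prod p1 p2 p3 p4 (I : finType) (P : pred I) (G : I -> P4 F) :
  eval_at p1 p2 p3 p4 (\prod_(i | P i) G i) = \prod_(i | P i) eval_at p1 p2 p3 p4 (G i).
Proof. by apply: (big_morph _ (eval_atM p1 p2 p3 p4)); rewrite /eval_at !hornerC. Qed.

Lemma eval_cst p1 p2 p3 p4 c : eval_at p1 p2 p3 p4 (cst c) = c.
Proof. by rewrite /eval_at /cst !hornerC. Qed.

Lemma eval_varx p1 p2 p3 p4 : eval_at p1 p2 p3 p4 (varx F) = p1.
Proof. by rewrite /eval_at /varx !hornerC hornerX. Qed.

Lemma eval_vary p1 p2 p3 p4 : eval_at p1 p2 p3 p4 (vary F) = p2.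
Proof. by rewrite /eval_at /vary !hornerC hornerX hornerC. Qed.

Lemma eval_varz p1 p2 p3 p4 : eval_at p1 p2 p3 p4 (varz F) = p3.
Proof. by rewrite /eval_at /varz hornerC hornerX !hornerC. Qed.

Lemma eval_varw p1 p2 p3 p4 : eval_at p1 p2 p3 p4 (varw F) = p4.
Proof. by rewrite /eval_at /varw hornerX !hornerC. Qed.

Lemma eval_lin p1 p2 p3 p4 c1 c2 c3 c4 :
  eval_at p1 p2 p3 p4
    (cst c1 * varx F + cst c2 * vary F + cst c3 * varz F + cst c4 * varw F)
  = c1 * p1 + c2 * p2 + c3 * p3 + c4 * p4.
Proof.
(* Rewriting with eval_cst instead would try to unify [cst ?c] with the
   variables, unfolding the nested polynomial structures: very slow. *)
rewrite !eval_atD !eval_atM.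
by congr (_ * _ + _ * _ + _ * _ + _ * _);
  [exact: eval_cst | exact: eval_varx | exact: eval_cst | exact: eval_vary
  | exact: eval_cst | exact: eval_varz | exact: eval_cst | exact: eval_varw].
Qed.

Lemma eval_linform p1 p2 p3 p4 l : is_linform l ->
  eval_at p1 p2 p3 p4 l = eval_at 1 0 0 0 l * p1 + eval_at 0 1 0 0 l * p2
                          + eval_at 0 0 1 0 l * p3 + eval_at 0 0 0 1 l * p4.
Proof.
case=> c1 [c2 [c3 [c4 ->]]].
by rewrite !eval_lin !mulr1 !mulr0 !addr0 !add0r.
Qed.

End Evaluation.

Section Ideals.
Variables (F : numClosedFieldType) (p1 p2 p3 p4 : F).
Implicit Types (G : seq (P4 F)) (f g : P4 F).

Lemma mem_in_ideal G g : g \in G -> in_ideal G g.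
Proof.
elim: G => [|h G IH] //; rewrite inE; case: eqP => [-> _ | _ /IH [c [sc ->]]].
  exists (1 :: nseq (size G) 0); split; first by rewrite /= size_nseq.
  rewrite big_ord_recl /= mul1r big1 ?addr0 // => i _.
  by rewrite nth_nseq if_same mul0r.
exists (0 :: c); split; first by rewrite /= sc.
by rewrite big_ord_recl /= mul0r add0r.
Qed.

Lemma in_idealMl G g f : in_ideal G f -> in_ideal G (g * f).
Proof.
case=> c [sc ->]; exists [seq g * x | x <- c]; split; first by rewrite size_map.
rewrite mulr_sumr; apply: eq_bigr => i _.
by rewrite (nth_map 0) ?mulrA // sc.
Qed.

Lemma eval_at_in_ideal_eq0 G f :
  {in G, forall g, eval_at p1 p2 p3 p4 g = 0} -> in_ideal G f -> eval_at p1 p2 p3 p4 f = 0.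
Proof.
move=> G0 [c [_ ->]]; rewrite eval_at_sum big1 // => i _.
by rewrite eval_atM (G0 G`_i) ?mulr0 // mem_nth.
Qed.

Lemma eval_at_in_radical_eq0 G f :
  {in G, forall g, eval_at p1 p2 p3 p4 g = 0} -> in_radical G f -> eval_at p1 p2 p3 p4 f = 0.
Proof.
move=> G0 [k /(eval_at_in_ideal_eq0 G0)]; rewrite eval_atX => /eqP.
by rewrite expf_eq0 => /andP[_ /eqP].
Qed.

End Ideals.

Section IaGenerators.
Variables (F : numClosedFieldType) (p1 p2 p3 p4 : F).
Variables (n : nat) (lam : 'I_n -> P4 F) (a : nat).

Definition vanishing_forms : {set 'I_n} := [set i | eval_at p1 p2 p3 p4 (lam i) == 0].

Lemma Ia_gens_eval_eq0 :
  (n - a < #|vanishing_forms|)%N -> {in Ia_gens lam a, forall g, eval_at p1 p2 p3 p4 g = 0}.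
Proof.
move=> big_zeros g /mapP[B]; rewrite mem_enum inE => /eqP cardB ->.
have : ~~ (B \subset ~: vanishing_forms).
  apply/negP => /subset_leq_card; have := cardsC vanishing_forms; rewrite card_ord; lia.
case/subsetPn => i iB; rewrite !inE negbK => /eqP lam_i0.
by rewrite eval_at_prod (bigD1 i iB) /= lam_i0 mul0r.
Qed.

Lemma Ia_gens_eval_neq0 : (a <= n)%N -> (#|vanishing_forms| <= n - a)%N ->
  exists2 g, g \in Ia_gens lam a & eval_at p1 p2 p3 p4 g != 0.
Proof.
move=> a_le_n few_zeros.
have /card_geqP[s [uniq_s size_s sub_s]] : (a <= #|~: vanishing_forms|)%N.
  by have := cardsC vanishing_forms; rewrite card_ord; lia.
exists (\prod_(i in [set x in s]) lam i).
  apply/mapP; exists [set x in s] => //.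
  by rewrite mem_enum inE cardsE (card_uniqP uniq_s) size_s.
rewrite eval_at_prod; apply/prodf_neq0 => i; rewrite inE => /sub_s.
by rewrite !inE.
Qed.

End IaGenerators.

Section RadicalZeroSet.
Variables (F : numClosedFieldType) (n : nat) (lam : 'I_n -> P4 F) (a : nat).
Hypothesis a_le_n : (a <= n)%N.
Hypothesis radical_Ia : forall f : P4 F,
  in_radical (Ia_gens lam a) f <->
  in_ideal [:: varx F; varz F; varw F] f /\ in_ideal [:: varx F; vary F] f.

Lemma radical_Ia_zero_set (p1 p2 p3 p4 : F) :
  (n - a < #|vanishing_forms p1 p2 p3 p4 lam|)%N <->
  p1 = 0 /\ (p2 = 0 \/ p3 = 0 /\ p4 = 0).
Proof.
split=> [big_zeros | [-> p_VI]].
  have vanish f : in_ideal [:: varx F; varz F; varw F] f ->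
      in_ideal [:: varx F; vary F] f -> eval_at p1 p2 p3 p4 f = 0.
    move=> If1 If2; apply: eval_at_in_radical_eq0 (Ia_gens_eval_eq0 big_zeros) _.
    exact/radical_Ia.
  have x0 : p1 = 0.
    rewrite -(eval_varx p1 p2 p3 p4).
    by apply: vanish; apply: mem_in_ideal; rewrite inE eqxx.
  have y_mul v : v \in [:: varz F; varw F] -> eval_at p1 p2 p3 p4 (vary F * v) = 0.
    move=> v_zw; apply: vanish; last first.
      by rewrite mulrC; apply/in_idealMl/mem_in_ideal; rewrite !inE eqxx orbT.
    by apply/in_idealMl/mem_in_ideal; rewrite inE v_zw orbT.
  have /eqP := y_mul _ (mem_head _ _).
  have /eqP := y_mul _ (mem_last (varz F) [:: varw F]).
  rewrite !eval_atM eval_vary eval_varz eval_varw !mulf_eq0.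
  by move=> /orP[/eqP ? _ | /eqP ? /orP[]/eqP ?]; split=> //; tauto.
rewrite ltnNge; apply/negP => few_zeros.
have [g g_gen /negP[]] := Ia_gens_eval_neq0 a_le_n few_zeros; apply/eqP.
have [Ig1 Ig2] : in_ideal [:: varx F; varz F; varw F] g /\ in_ideal [:: varx F; vary F] g.
  by apply/radical_Ia; exists 1%N; rewrite expr1; exact: mem_in_ideal.
case: p_VI => [-> | [-> ->]].
  apply: eval_at_in_ideal_eq0 Ig2 => _ /[!inE] /orP[]/eqP->.
  - exact: eval_varx.
  - exact: eval_vary.
apply: eval_at_in_ideal_eq0 Ig1 => _ /[!inE] /or3P[]/eqP->.
- exact: eval_varx.
- exact: eval_varz.
- exact: eval_varw.
Qed.

End RadicalZeroSet.

Section FormConfiguration.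
Variables (F : numClosedFieldType) (n : nat) (A B C D : 'I_n -> F).

Local Notation form i p1 p2 p3 p4 := (A i * p1 + B i * p2 + C i * p3 + D i * p4).
Local Notation zero_set p1 p2 p3 p4 := [set i | form i p1 p2 p3 p4 == 0].
Local Notation xy_forms := [set i | (C i == 0) && (D i == 0)].

Hypothesis zero_setP : forall p1 p2 p3 p4,
  (2 < #|zero_set p1 p2 p3 p4|)%N <->
  p1 = 0 /\ (p2 = 0 \/ p3 = 0 /\ p4 = 0).

Lemma vanishing_triple p1 p2 p3 p4 i j k :
  [/\ i != j, j != k & k != i] ->
  [/\ form i p1 p2 p3 p4 = 0, form j p1 p2 p3 p4 = 0 & form k p1 p2 p3 p4 = 0] ->
  p1 = 0 /\ (p2 = 0 \/ p3 = 0 /\ p4 = 0).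
Proof.
move=> distinct [fi fj fk]; apply/zero_setP/card_gt2P.
by exists i, j, k; rewrite !inE fi fj fk eqxx.
Qed.

Lemma card_xy_forms : (2 < #|xy_forms|)%N.
Proof.
set S := xy_forms; rewrite ltnNge; apply/negP => small_S.
have /fin_all_exists[f f_zero] (t : 'I_n.+1) :
    exists i, i \in zero_set 0 0 1 t%:R :\: S.
  have : (2 < #|zero_set 0 0 1 t%:R|)%N by apply/zero_setP; split; last left.
  move=> big_Z; have /subsetPn[i iZ iS] : ~~ (zero_set 0 0 1 t%:R \subset S).
    by apply/negP => /subset_leq_card; lia.
  by exists i; rewrite inE iZ iS.
suff /leq_card : injective f by rewrite !card_ord ltnn.
move=> t s eq_f; apply/val_inj/eqP; rewrite -(eqr_nat F).
move: (f_zero t) (f_zero s); rewrite eq_f !inE !mulr0 !add0r mulr1.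
move: (f s) => i /andP[i_notin_S /eqP ft] /andP[_ /eqP fs].
apply: contraR i_notin_S => neq_ts.
have : D i * (t%:R - s%:R) = (C i + D i * t%:R) - (C i + D i * s%:R) by ring.
rewrite ft fs subrr => /eqP; rewrite mulf_eq0 subr_eq0 (negPf neq_ts) orbF => /eqP Di.
by move: ft; rewrite Di mul0r addr0 => ->; rewrite eqxx.
Qed.

Lemma exists_y_form : exists u, [/\ C u = 0, D u = 0 & B u != 0].
Proof.
have /subsetPn[u] : ~~ (xy_forms \subset zero_set 0 1 1 0).
  apply/negP => /subset_leq_card/(leq_trans card_xy_forms)/zero_setP.
  by case=> _ [|[]] /eqP; rewrite oner_eq0.
rewrite !inE => /andP[/eqP Cu /eqP Du] fu; exists u; split=> //.
by apply: contra fu => /eqP Bu; rewrite Cu Du Bu !(mulr0, mul0r, addr0).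
Qed.

Lemma exists_xzw_triple : exists i j k,
  [/\ i != j, j != k & k != i] /\ [/\ B i = 0, B j = 0 & B k = 0].
Proof.
have /card_gt2P[i [j [k [[iZ jZ kZ] distinct]]]] : (2 < #|zero_set 0 1 0 0|)%N.
  by apply/zero_setP; split; last right.
exists i, j, k; split=> //; move: iZ jZ kZ.
by rewrite !inE !mulr0 !mulr1 !add0r !addr0 => /eqP-> /eqP-> /eqP->.
Qed.

Lemma xzw_forms_parallel i j : i != j -> B i = 0 -> B j = 0 ->
  C i * D j = C j * D i.
Proof.
move=> ij Bi Bj; apply/eqP; rewrite -subr_eq0; apply: contraT => det_neq0.
have [u [Cu Du Bu]] := exists_y_form.
have ui : u != i by apply: contraNneq Bu => ->; rewrite Bi.
have ju : j != u by apply: contraNneq Bu => <-; rewrite Bj.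
set det := C i * D j - C j * D i in det_neq0.
pose y0 := - (A u / B u).
pose z0 := (A j * D i - A i * D j) / det.
pose w0 := (A i * C j - A j * C i) / det.
have fu : form u 1 y0 z0 w0 = 0 by rewrite Cu Du /y0; field.
have fi : form i 1 y0 z0 w0 = 0 by rewrite Bi /z0 /w0 /det; field.
have fj : form j 1 y0 z0 w0 = 0 by rewrite Bj /z0 /w0 /det; field.
have [/eqP] := vanishing_triple (And3 ui ij ju) (And3 fu fi fj).
by rewrite oner_eq0.
Qed.

Lemma xzw_form_zw_zero i j k : [/\ i != j, j != k & k != i] ->
  B i = 0 -> B j = 0 -> B k = 0 -> C i = 0 /\ D i = 0.
Proof.
move=> distinct Bi Bj Bk; have [ij _ ki] := distinct.
have fi : form i 0 1 (- D i) (C i) = 0 by rewrite Bi; ring.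
have fj : form j 0 1 (- D i) (C i) = 0.
  have -> : form j 0 1 (- D i) (C i) = C i * D j - C j * D i by rewrite Bj; ring.
  by rewrite (xzw_forms_parallel ij Bi Bj) subrr.
have fk : form k 0 1 (- D i) (C i) = 0.
  have -> : form k 0 1 (- D i) (C i) = C i * D k - C k * D i by rewrite Bk; ring.
  by rewrite (xzw_forms_parallel _ Bi Bk) ?subrr // eq_sym.
case: (vanishing_triple distinct (And3 fi fj fk)) => _ [/eqP | [/eqP]].
  by rewrite oner_eq0.
by rewrite oppr_eq0 => /eqP.
Qed.

Lemma no_form_configuration : False.
Proof.
have [t1 [t2 [t3 [distinct [B1 B2 B3]]]]] := exists_xzw_triple.
have [d12 d23 d31] := distinct.
have [C1 D1] := xzw_form_zw_zero distinct B1 B2 B3.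
have [C2 D2] := xzw_form_zw_zero (And3 d23 d31 d12) B2 B3 B1.
have [C3 D3] := xzw_form_zw_zero (And3 d31 d12 d23) B3 B1 B2.
have vanish t : B t = 0 -> C t = 0 -> D t = 0 -> form t 0 1 0 1 = 0.
  by move=> -> -> ->; rewrite !(mulr0, mul0r, addr0).
have := vanishing_triple distinct
  (And3 (vanish _ B1 C1 D1) (vanish _ B2 C2 D2) (vanish _ B3 C3 D3)).
by case=> _ [|[_]] /eqP; rewrite oner_eq0.
Qed.

End FormConfiguration.

Theorem mainTheorem6 (F : numClosedFieldType) (n : nat) (lam : 'I_n -> P4 F) (a : nat) :
  (forall i, is_linform (lam i) /\ lam i != 0) ->
  (1 <= a <= n)%N ->
  (n - a + 1 = 3)%N ->
  ~ (forall f : P4 F,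
       in_radical (Ia_gens lam a) f <->
       (in_ideal [:: varx F; varz F; varw F] f /\ in_ideal [:: varx F; vary F] f)).
Proof.
move=> lam_lin /andP[_ a_le_n] n_a radical_Ia.
pose coef p1 p2 p3 p4 i := eval_at p1 p2 p3 p4 (lam i).
apply: (@no_form_configuration F n
  (coef 1 0 0 0) (coef 0 1 0 0) (coef 0 0 1 0) (coef 0 0 0 1)) => p1 p2 p3 p4.
rewrite -(radical_Ia_zero_set a_le_n radical_Ia) (_ : n - a = 2)%N; last by lia.
rewrite (@eq_card _ _ (vanishing_forms p1 p2 p3 p4 lam)) // => i.
by rewrite !inE /coef -eval_linform //; case: (lam_lin i).
Qed.
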